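(* Let $P$ be a poset, $\mathcal F$ a standard collection of upsets and $\mathcal I$ a standard collection of downsets of $P$ (treated as disjoint sets), and suppose there exists a canonical extension $e:P\to C$ of $P$ with respect to $(\mathcal F,\mathcal I)$. Order $\mathcal F$ by reverse inclusion and $\mathcal I$ by inclusion, let $e_{\mathcal F}(p)=p^\uparrow$ and $e_{\mathcal I}(p)=p^\downarrow$, and let $R_l\subseteq\mathcal F\times\mathcal I$ be defined by $F\,R_l\,I$ iff $e_{\mathcal F}^{-1}(F^\uparrow)\cap e_{\mathcal I}^{-1}(I^\downarrow)\ne\emptyset$ (equivalently, $F\cap I\neq\emptyset$). Then $(e_{\mathcal F},e_{\mathcal I},R_l)$ is a Galois polarity.
   Context: For an element $q$ of a poset, $q^\uparrow=\{q'\ge q\}$, $q^\downarrow=\{q'\le q\}$; $e^{-1}(Z)=\{p:e(p)\in Z\}$. A collection of upsets (downsets) of $P$ is standard if it contains all $p^\uparrow$ (all $p^\downarrow$). A completion is an order-embedding into a complete lattice. A canonical extension of $P$ w.r.t. $(\mathcal F,\mathcal I)$ is a completion $e:P\to C$ such that every $z\in C$ satisfies $z=\bigvee\{\bigwedge e[F]:F\in\mathcal F,\bigwedge e[F]\le z\}=\bigwedge\{\bigvee e[I]:I\in\mathcal I,\bigvee e[I]\ge z\}$, and such that $\bigwedge e[F]\le\bigvee e[I]$ with $F\in\mathcal F,I\in\mathcal I$ implies $F\cap I\ne\emptyset$. A meet-extension is an order-embedding $e:P\to X$ with $x=\bigwedge e[e^{-1}(x^\uparrow)]$ for all $x$; a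 join-extension dually. A Galois polarity is a triple $(e_X,e_Y,R)$ where $e_X:P\to X$ is a meet-extension, $e_Y:P\to Y$ a join-extension, $X,Y$ disjoint, $R\subseteq X\times Y$, such that there is a quasiorder $\preceq$ on $X\cup Y$ with: for $x\in X,y\in Y$, $x\preceq y$ iff $xRy$; and, writing $X\uplus_\preceq Y$ for the poset induced by $\preceq$ and $\iota_X,\iota_Y$ for the maps induced by inclusion, $\iota_X$ and $\iota_Y$ are order-embeddings, $\iota_X\circ e_X=\iota_Y\circ e_Y$, for every $S\subseteq P$ with $\bigwedge e_X[S]$ existing in $X$ we have $\iota_X(\bigwedge e_X[S])=\bigwedge\iota_X\circ e_X[S]$, and for every $T\subseteq P$ with $\bigvee e_Y[T]$ existing in $Y$ we have $\iota_Y(\bigvee e_Y[T])=\bigvee\iota_Y\circ e_Y[T]$. *)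

Set Implicit Arguments.

Section Order.
Variable T : Type.
Variable le : T -> T -> Prop.

Definition is_preorder : Prop :=
  (forall x, le x x) /\ (forall x y z, le x y -> le y z -> le x z).

Definition is_partial_order : Prop :=
  is_preorder /\ (forall x y, le x y -> le y x -> x = y).

(* m is a greatest lower bound of S (in a preorder this is exactly the
   statement that the class of m is the meet in the induced poset) *)
Definition is_glb (S : T -> Prop) (m : T) : Prop :=
  (forall s, S s -> le m s) /\ (forall z, (forall s, S s -> le z s) -> le z m).

Definition is_lub (S : T -> Prop) (m : T) : Prop :=
  (forall s, S s -> le s m) /\ (forall z, (forall s, S s -> le s z) -> le m z).

Definition is_complete_lattice : Prop :=
  is_partial_order /\
  (forall S : T -> Prop, exists m, is_glb S m) /\
  (forall S : T -> Prop, exists m, is_lub S m).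

Definition is_upset (U : T -> Prop) : Prop := forall x y, U x -> le x y -> U y.
Definition is_downset (D : T -> Prop) : Prop := forall x y, D y -> le x y -> D x.

Definition up (q : T) : T -> Prop := fun q' => le q q'.
Definition down (q : T) : T -> Prop := fun q' => le q' q.
End Order.

Definition image {A B : Type} (f : A -> B) (S : A -> Prop) : B -> Prop :=
  fun b => exists a, S a /\ b = f a.
Definition preimage {A B : Type} (f : A -> B) (Z : B -> Prop) : A -> Prop :=
  fun a => Z (f a).

Definition order_embedding {A B : Type} (leA : A -> A -> Prop)
  (leB : B -> B -> Prop) (f : A -> B) : Prop :=
  forall a a', leA a a' <-> leB (f a) (f a').

Definition completion {P C : Type} (leP : P -> P -> Prop) (leC : C -> C -> Prop)
  (e : P -> C) : Prop :=
  is_complete_lattice leC /\ order_embedding leP leC e.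

Definition canonical_extension {P C : Type} (leP : P -> P -> Prop)
  (F I : (P -> Prop) -> Prop) (leC : C -> C -> Prop) (e : P -> C) : Prop :=
  completion leP leC e /\
  (forall z : C,
     is_lub leC (fun a => exists U, F U /\ is_glb leC (image e U) a /\ leC a z) z) /\
  (forall z : C,
     is_glb leC (fun b => exists D, I D /\ is_lub leC (image e D) b /\ leC z b) z) /\
  (forall U D a b, F U -> I D -> is_glb leC (image e U) a ->
     is_lub leC (image e D) b -> leC a b -> exists p, U p /\ D p).

Definition meet_extension {P X : Type} (leP : P -> P -> Prop)
  (leX : X -> X -> Prop) (e : P -> X) : Prop :=
  is_partial_order leX /\ order_embedding leP leX e /\
  forall x, is_glb leX (image e (preimage e (up leX x))) x.

Definition join_extension {P Y : Type} (leP : P -> P -> Prop)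
  (leY : Y -> Y -> Prop) (e : P -> Y) : Prop :=
  is_partial_order leY /\ order_embedding leP leY e /\
  forall y, is_lub leY (image e (preimage e (down leY y))) y.

(* Galois polarity; X and Y are made disjoint by working in the sum type X + Y.
   The quasiorder q on X + Y induces the poset X ⊎_q Y (its quotient); the
   conditions on iota_X, iota_Y are stated on representatives. *)
Definition galois_polarity {P X Y : Type} (leP : P -> P -> Prop)
  (leX : X -> X -> Prop) (leY : Y -> Y -> Prop)
  (eX : P -> X) (eY : P -> Y) (R : X -> Y -> Prop) : Prop :=
  meet_extension leP leX eX /\ join_extension leP leY eY /\
  exists q : X + Y -> X + Y -> Prop,
    is_preorder q /\
    (forall x y, q (inl x) (inr y) <-> R x y) /\
    order_embedding leX q inl /\
    order_embedding leY q inr /\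
    (forall p, q (inl (eX p)) (inr (eY p)) /\ q (inr (eY p)) (inl (eX p))) /\
    (forall (S : P -> Prop) (m : X), is_glb leX (image eX S) m ->
        is_glb q (image (fun p => inl (eX p)) S) (inl m)) /\
    (forall (T : P -> Prop) (j : Y), is_lub leY (image eY T) j ->
        is_lub q (image (fun p => inr (eY p)) T) (inr j)).

Definition Fset {P : Type} (F : (P -> Prop) -> Prop) := {U : P -> Prop | F U}.
Definition Iset {P : Type} (I : (P -> Prop) -> Prop) := {D : P -> Prop | I D}.

Definition leF {P : Type} (F : (P -> Prop) -> Prop) (U V : Fset F) : Prop :=
  forall p, proj1_sig V p -> proj1_sig U p.
Definition leI {P : Type} (I : (P -> Prop) -> Prop) (D E : Iset I) : Prop :=
  forall p, proj1_sig D p -> proj1_sig E p.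

Definition eF {P : Type} (leP : P -> P -> Prop) (F : (P -> Prop) -> Prop)
  (hF : forall p, F (up leP p)) (p : P) : Fset F := exist _ (up leP p) (hF p).
Definition eI {P : Type} (leP : P -> P -> Prop) (I : (P -> Prop) -> Prop)
  (hI : forall p, I (down leP p)) (p : P) : Iset I := exist _ (down leP p) (hI p).

Definition Rl {P : Type} (leP : P -> P -> Prop) (F I : (P -> Prop) -> Prop)
  (hF : forall p, F (up leP p)) (hI : forall p, I (down leP p))
  (U : Fset F) (D : Iset I) : Prop :=
  exists p, preimage (@eF P leP F hF) (up (@leF P F) U) p /\
            preimage (@eI P leP I hI) (down (@leI P I) D) p.

(* The quasiorder is that of the concept lattice of the context (F, I, meets),
   where [meets U D] says that U and D intersect: an element is compared
   through its intent, the set of downsets of I lying above it. For U in F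
   these are the downsets meeting U; for D in I, those meeting every upset
   that meets D. As p^up meets exactly the downsets containing p, and p^down
   is met exactly by the upsets containing p, the elements e_F(p) and e_I(p)
   get the same intent. A meet of e_F[S] in F is an upset of F included in
   every upset of F containing S, and this is what keeps it a meet after the
   embedding; joins in I are dual. *)

From Stdlib Require Import FunctionalExtensionality PropExtensionality ProofIrrelevance.

Lemma pred_sig_ext {A : Type} (Q : (A -> Prop) -> Prop) (U V : {W : A -> Prop | Q W}) :
  (forall a, proj1_sig U a <-> proj1_sig V a) -> U = V.
Proof.
  destruct U as [u hu], V as [v hv]; simpl; intros Huv.
  assert (u = v) as <-.
  { apply functional_extensionality; intro a; apply propositional_extensionality, Huv. }
  f_equal; apply proof_irrelevance.
Qed.

Lemma preorder_flip {T : Type} {le : T -> T -> Prop} :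
  is_preorder le -> is_preorder (fun x y => le y x).
Proof. intros [hrefl htrans]; split; eauto. Qed.

Lemma partial_order_flip {T : Type} {le : T -> T -> Prop} :
  is_partial_order le -> is_partial_order (fun x y => le y x).
Proof. intros [hpre hanti]; split; [apply preorder_flip, hpre | eauto]. Qed.

Lemma join_extension_of_flip {P Y : Type} (leP : P -> P -> Prop) (leY : Y -> Y -> Prop)
  (e : P -> Y) :
  meet_extension (fun x y => leP y x) (fun x y => leY y x) e -> join_extension leP leY e.
Proof.
  intros [hpo [hemb hdense]]; split; [|split].
  - exact (partial_order_flip hpo).
  - intros a a'; exact (hemb a' a).
  - exact hdense.
Qed.

Definition meets {P : Type} (U D : P -> Prop) : Prop := exists p, U p /\ D p.

Section MeetExtension.
Context {P : Type} {leP : P -> P -> Prop} {F : (P -> Prop) -> Prop}.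
Hypothesis hpre : is_preorder leP.
Hypothesis hFup : forall U, F U -> is_upset leP U.
Hypothesis hF : forall p, F (up leP p).

Lemma Fset_upset (U : Fset F) : is_upset leP (proj1_sig U).
Proof. exact (hFup _ (proj2_sig U)). Qed.

Lemma leF_partial_order : is_partial_order (@leF P F).
Proof.
  unfold leF; split; [split|]; eauto.
  intros U V HUV HVU; apply pred_sig_ext; split; auto.
Qed.

Lemma eF_order_embedding : order_embedding leP (@leF P F) (eF leP F hF).
Proof.
  destruct hpre as [hrefl htrans].
  intros a a'; unfold leF, eF, up; simpl; split.
  - intros Haa' p Hp; eauto.
  - intros H; apply H, hrefl.
Qed.

Lemma preimage_eF_up (U : Fset F) (p : P) :
  preimage (eF leP F hF) (up (@leF P F) U) p <-> proj1_sig U p.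
Proof.
  unfold preimage, up, leF, eF; simpl; split.
  - intros H; apply H, (proj1 hpre).
  - intros HU q Hq; exact (Fset_upset U p q HU Hq).
Qed.

Lemma eF_meet_dense (U : Fset F) :
  is_glb (@leF P F) (image (eF leP F hF) (preimage (eF leP F hF) (up (@leF P F) U))) U.
Proof.
  split.
  - intros s [p [Hp ->]]; exact Hp.
  - intros V HV p Hp.
    apply (HV (eF leP F hF p)).
    + exists p; split; [apply preimage_eF_up; exact Hp | reflexivity].
    + apply (proj1 hpre).
Qed.

Theorem eF_meet_extension : meet_extension leP (@leF P F) (eF leP F hF).
Proof.
  split; [apply leF_partial_order | split; [apply eF_order_embedding | apply eF_meet_dense]].
Qed.

End MeetExtension.

(* [eI leP I hI] is convertibly [eF] for the opposite order of [leP], and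
   [leI] the opposite of [leF]: the join half is the meet half for the
   opposite order. *)

Lemma downset_flip {P : Type} {leP : P -> P -> Prop} {D : P -> Prop} :
  is_downset leP D -> is_upset (fun x y => leP y x) D.
Proof. intros hD x y Hx Hyx; exact (hD y x Hx Hyx). Qed.

Section JoinExtension.
Context {P : Type} {leP : P -> P -> Prop} {I : (P -> Prop) -> Prop}.
Hypothesis hpre : is_preorder leP.
Hypothesis hIdown : forall D, I D -> is_downset leP D.
Hypothesis hI : forall p, I (down leP p).

Lemma Iset_downset (D : Iset I) : is_downset leP (proj1_sig D).
Proof. exact (hIdown _ (proj2_sig D)). Qed.

Lemma preimage_eI_down (D : Iset I) (p : P) :
  preimage (eI leP I hI) (down (@leI P I) D) p <-> proj1_sig D p.
Proof.
  exact (preimage_eF_up (preorder_flip hpre)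
           (fun D hD => downset_flip (hIdown D hD)) hI D p).
Qed.

Theorem eI_join_extension : join_extension leP (@leI P I) (eI leP I hI).
Proof.
  apply join_extension_of_flip.
  exact (eF_meet_extension (preorder_flip hpre)
           (fun D hD => downset_flip (hIdown D hD)) hI).
Qed.

End JoinExtension.

Section Polarity.
Context {P : Type} {leP : P -> P -> Prop} {F I : (P -> Prop) -> Prop}.
Hypothesis hpre : is_preorder leP.
Hypothesis hFup : forall U, F U -> is_upset leP U.
Hypothesis hIdown : forall D, I D -> is_downset leP D.
Hypothesis hF : forall p, F (up leP p).
Hypothesis hI : forall p, I (down leP p).

Definition intent (z : Fset F + Iset I) : Iset I -> Prop :=
  match z with
  | inl U => fun E => meets (proj1_sig U) (proj1_sig E)
  | inr D => fun E => forall V : Fset F,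
      meets (proj1_sig V) (proj1_sig D) -> meets (proj1_sig V) (proj1_sig E)
  end.

Definition polarity_le (a b : Fset F + Iset I) : Prop :=
  forall E, intent b E -> intent a E.

Lemma polarity_le_preorder : is_preorder polarity_le.
Proof. unfold polarity_le; split; auto. Qed.

Lemma meets_up_l (p : P) (E : Iset I) :
  meets (up leP p) (proj1_sig E) <-> proj1_sig E p.
Proof.
  split.
  - intros [q [Hpq HEq]]; exact (Iset_downset hIdown E p q HEq Hpq).
  - intros HEp; exists p; split; [apply (proj1 hpre) | exact HEp].
Qed.

Lemma meets_down_r (U : Fset F) (p : P) :
  meets (proj1_sig U) (down leP p) <-> proj1_sig U p.
Proof.
  split.
  - intros [q [HUq Hqp]]; exact (Fset_upset hFup U q p HUq Hqp).
  - intros HUp; exists p; split; [exact HUp | apply (proj1 hpre)].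
Qed.

Lemma intent_eF (p : P) (E : Iset I) :
  intent (inl (eF leP F hF p)) E <-> proj1_sig E p.
Proof. exact (meets_up_l p E). Qed.

Lemma intent_eI (p : P) (E : Iset I) :
  intent (inr (eI leP I hI p)) E <-> proj1_sig E p.
Proof.
  simpl; split.
  - intros H; apply meets_up_l, (H (eF leP F hF p)).
    exists p; split; apply (proj1 hpre).
  - intros HEp V HV; exists p; split; [apply (meets_down_r V p), HV | exact HEp].
Qed.

Lemma polarity_le_inl_inr (U : Fset F) (D : Iset I) :
  polarity_le (inl U) (inr D) <-> meets (proj1_sig U) (proj1_sig D).
Proof.
  unfold polarity_le; simpl; split.
  - intros H; apply (H D); auto.
  - intros HUD E HE; apply HE, HUD.
Qed.

Lemma Rl_meets (U : Fset F) (D : Iset I) :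
  Rl leP hF hI U D <-> meets (proj1_sig U) (proj1_sig D).
Proof.
  split; intros [p [HU HD]]; exists p; split.
  - exact (proj1 (preimage_eF_up hpre hFup hF U p) HU).
  - exact (proj1 (preimage_eI_down hpre hIdown hI D p) HD).
  - exact (proj2 (preimage_eF_up hpre hFup hF U p) HU).
  - exact (proj2 (preimage_eI_down hpre hIdown hI D p) HD).
Qed.

Lemma inl_order_embedding : order_embedding (@leF P F) polarity_le inl.
Proof.
  intros U V; unfold polarity_le, leF; simpl; split.
  - intros HVU E [p [HVp HEp]]; exists p; auto.
  - intros H v HVv.
    apply (meets_down_r U v), (H (eI leP I hI v)), (meets_down_r V v), HVv.
Qed.

Lemma inr_order_embedding : order_embedding (@leI P I) polarity_le inr.
Proof.
  intros D E; unfold polarity_le, leI; simpl; split.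
  - intros HDE G HEG V [p [HVp HDp]]; apply HEG; exists p; auto.
  - intros H d HDd.
    apply (meets_up_l d E), (H E (fun V HV => HV) (eF leP F hF d)), (meets_up_l d D), HDd.
Qed.

Lemma eF_eI_polarity_equiv (p : P) :
  polarity_le (inl (eF leP F hF p)) (inr (eI leP I hI p)) /\
  polarity_le (inr (eI leP I hI p)) (inl (eF leP F hF p)).
Proof.
  split; intros E HE.
  - apply intent_eF, (intent_eI p E), HE.
  - apply intent_eI, (intent_eF p E), HE.
Qed.

Lemma inl_preserves_glb (S : P -> Prop) (m : Fset F) :
  is_glb (@leF P F) (image (eF leP F hF) S) m ->
  is_glb polarity_le (image (fun p => inl (eF leP F hF p)) S) (inl m).
Proof.
  intros [Hlower Hgreatest]; split.
  - intros s [p [Hp ->]]; apply inl_order_embedding, Hlower; exists p; auto.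
  - intros z Hz.
    assert (HzS : forall p, S p -> intent z (eI leP I hI p)).
    { intros p Hp; apply (Hz (inl (eF leP F hF p))).
      - exists p; auto.
      - apply meets_up_l, (proj1 hpre). }
    assert (Hm : forall V : Fset F, (forall p, S p -> proj1_sig V p) -> @leF P F V m).
    { intros V HV; apply Hgreatest; intros s [p [Hp ->]] q Hpq.
      exact (Fset_upset hFup V p q (HV p Hp) Hpq). }
    intros E [x [Hmx HEx]]; destruct z as [U | D]; simpl.
    + exists x; split; [|exact HEx].
      apply (Hm U); [intros p Hp; apply meets_down_r, HzS, Hp | exact Hmx].
    + intros V HVD; exists x; split; [|exact HEx].
      apply (Hm V); [intros p Hp; apply meets_down_r, (HzS p Hp V HVD) | exact Hmx].
Qed.

Lemma inr_preserves_lub (T : P -> Prop) (j : Iset I) :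
  is_lub (@leI P I) (image (eI leP I hI) T) j ->
  is_lub polarity_le (image (fun p => inr (eI leP I hI p)) T) (inr j).
Proof.
  intros [Hupper Hleast]; split.
  - intros s [p [Hp ->]]; apply inr_order_embedding, Hupper; exists p; auto.
  - intros z Hz E HzE.
    assert (HjE : @leI P I j E).
    { apply Hleast; intros s [p [Hp ->]] q Hqp.
      apply (Iset_downset hIdown E q p); [|exact Hqp].
      apply (intent_eI p E), (Hz (inr (eI leP I hI p))); [exists p; auto | exact HzE]. }
    intros V [x [HVx Hjx]]; exists x; auto.
Qed.

End Polarity.

Theorem mainTheorem8 (P : Type) (leP : P -> P -> Prop)
  (F I : (P -> Prop) -> Prop)
  (hPo : is_partial_order leP)
  (hFup : forall U, F U -> is_upset leP U)
  (hIdown : forall D, I D -> is_downset leP D)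
  (hF : forall p, F (up leP p))
  (hI : forall p, I (down leP p))
  (hCE : exists (C : Type) (leC : C -> C -> Prop) (e : P -> C),
           canonical_extension leP F I leC e) :
  galois_polarity leP (@leF P F) (@leI P I) (@eF P leP F hF) (@eI P leP I hI)
    (@Rl P leP F I hF hI).
Proof.
  destruct hPo as [hpre _].
  split; [exact (eF_meet_extension hpre hFup hF) |].
  split; [exact (eI_join_extension hpre hIdown hI) |].
  exists (@polarity_le P F I).
  split; [apply polarity_le_preorder |].
  split.
  { intros U D.
    exact (iff_trans (polarity_le_inl_inr U D) (iff_sym (Rl_meets hpre hFup hIdown hF hI U D))). }
  split; [exact (inl_order_embedding hpre hFup hI) |].
  split; [exact (inr_order_embedding hpre hIdown hF) |].
  split; [exact (eF_eI_polarity_equiv hpre hFup hIdown hF hI) |].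
  split; [exact (inl_preserves_glb hpre hFup hIdown hF hI) |].
  exact (inr_preserves_lub hpre hFup hIdown hF hI).
Qed.
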